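(* Let $S$ be a compact Hausdorff topological Clifford semigroup satisfying: (B1) $E(S)$, with the subspace topology, is a metrizable perfect semilattice; (B2) each maximal subgroup $G_e$ is compact metrizable; (B3) the functor $e\mapsto G_e$ is inverse-limit preserving. Let $d$ be the function on $S\times S$ constructed below. Then $d$ is a metric on $S$ inducing the topology of $S$ (which coincides with the Bowman topology). In particular $S$ is metrizable.
   Context: A Clifford semigroup is an inverse semigroup (each $x$ has a unique $x^{-1}$ with $xx^{-1}x=x$, $x^{-1}xx^{-1}=x^{-1}$) with $xx^{-1}=x^{-1}x$ for all $x$; a topological Clifford semigroup has continuous multiplication and inversion. $E(S)$ is the set of idempotents, a semilattice ordered by $e\le f\iff ef=e$ (so $ef=\inf\{e,f\}$). $G_e:=\{x: xx^{-1}=e\}$ (subspace topology), $S=\bigsqcup_e G_e$, and we write elements of $S$ as pairs $(e,g)$ with $g\in G_e$. For $e\le f$, $\varphi_{f,e}\colon G_f\to G_e$, $x\mapsto ex$. Way-below: in a poset, $x\ll y$ if for every nonempty up-directed $D$ whose supremum exists with $y\le\sup D$, there is $d\in D$ with $x\le d$; $x\ll y$ implies $x\le y$. A perfect semilattice is a compact Hausdorff topological semilattice in which every point has a neighbourhood basis of open subsemilattices. It is known that a perfect semilattice is a complete continuous semilattice (every $x$ is the supremum of $\{y: y\ll x\}$, which is directed) whose topology is its Lawson topology; in particular each set $\twoheaduparrow b:=\{e: b\ll e\}$ is open, and $E(S)$ has a minimum $0$. A (domain) basis of $E(S)$ is a subset $\mathcal B$ such that for every $x$, $\{b\in\mathcal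 B: b\ll x\}$ is up-directed with supremum $x$; under (B1) $E(S)$ admits a countable basis. The functor $e\mapsto G_e$ is inverse-limit preserving if for every nonempty up-directed $D\subseteq E(S)$ with $e=\sup D$, the map $G_e\to\varprojlim_{b\in D}G_b$, $g\mapsto(\varphi_{e,b}(g))_{b\in D}$, is an isomorphism of topological groups. Construction of $d$: fix a compatible metric $\rho\le 1$ on $E(S)$ and a countable basis $\mathcal B=\{b_j\}_{j\ge1}$ of $E(S)$. For each $b\in\mathcal B$ choose a compatible metric $d_b\le1$ on $G_b$, a point $c_b\in G_b$, and a dense sequence $\{t_{b,k}\}_{k\ge1}$ in $G_b$. For $b\ne 0$ let $a_b(e):=\rho(e,E(S)\setminus\twoheaduparrow b)$ (distance to a set), and let $a_0\equiv1$. Let $\widehat\varphi_{e,b}\colon G_e\to G_b$ be $\varphi_{e,b}$ if $b\le e$ and the constant map with value $c_b$ otherwise. Put $P_b((e,g),(f,h)) := |a_b(e)-a_b(f)| + \sum_{k\ge1}2^{-k}\bigl|a_b(e)\,d_b(\widehat\varphi_{e,b}(g),t_{b,k}) - a_b(f)\,d_b(\widehat\varphi_{f,b}(h),t_{b,k})\bigr|$ and $d((e,g),(f,h)) := \rho(e,f)+\sum_{j\ge1}2^{-j}P_{b_j}((e,g),(f,h))$. *)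

From HB Require Import structures.
From mathcomp Require Import all_boot all_order all_algebra.
From mathcomp Require Import all_classical all_reals all_analysis.
Set Implicit Arguments. Unset Strict Implicit. Unset Printing Implicit Defensive.
Import Order.TTheory GRing.Theory Num.Theory.
Local Open Scope classical_set_scope.
Local Open Scope ring_scope.

Section Clifford.
Context {R : realType} {S : topologicalType}.

Definition is_metric_on (A : set S) (m : S -> S -> R) : Prop :=
  forall x y z, A x -> A y -> A z ->
    [/\ 0 <= m x y, (m x y = 0 <-> x = y), m x y = m y x
      & m x z <= m x y + m y z].

Definition compatible_metric (A : set S) (m : S -> S -> R) : Prop :=
  is_metric_on A m /\
  forall x, A x -> forall U : set S,
    (exists W : set S, [/\ open W, W x & W `&` A `<=` U]) <->
    (exists eps : R, 0 < eps /\ [set y | A y /\ m x y < eps] `<=` U).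

Definition metrizable (A : set S) : Prop := exists m, compatible_metric A m.

Definition dense_seq (A : set S) (t : nat -> S) : Prop :=
  (forall k, A (t k)) /\
  forall x, A x -> forall W : set S, open W -> W x -> exists k, W (t k).

Definition rsum (u : nat -> R) : R := limn (fun n => \sum_(k < n) u k).

Variables (mul : S -> S -> S) (inv : S -> S).

Definition topological_clifford : Prop :=
  [/\ (forall x y z, mul x (mul y z) = mul (mul x y) z),
      (forall x, mul (mul x (inv x)) x = x /\ mul (mul (inv x) x) (inv x) = inv x),
      (forall x y, mul (mul x y) x = x -> mul (mul y x) y = y -> y = inv x),
      (forall x, mul x (inv x) = mul (inv x) x)
    & continuous (fun p : S * S => mul p.1 p.2) /\ continuous inv].

Definition E : set S := [set e | mul e e = e].
Definition sle (e f : S) : Prop := mul e f = e.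

Definition G (e : S) : set S := [set x | mul x (inv x) = e].

Definition updirected (D : set S) : Prop :=
  (exists d, D d) /\
  forall a b, D a -> D b -> exists c, [/\ D c, sle a c & sle b c].

Definition is_sup (D : set S) (s : S) : Prop :=
  [/\ E s, (forall d, D d -> sle d s)
    & (forall u, E u -> (forall d, D d -> sle d u) -> sle s u)].

Definition waybelow (x y : S) : Prop :=
  forall D : set S, D `<=` E -> updirected D ->
  forall s, is_sup D s -> sle y s -> exists2 d, D d & sle x d.

Definition is_bottom (z : S) : Prop := E z /\ forall e, E e -> sle z e.

Definition domain_basis (B : set S) : Prop :=
  B `<=` E /\
  forall x, E x ->
    updirected [set b | B b /\ waybelow b x] /\
    is_sup [set b | B b /\ waybelow b x] x.

Definition rel_open (A V : set S) : Prop := exists W, open W /\ V = W `&` A.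

Definition perfect_semilattice : Prop :=
  [/\ compact E,
      {in E &, forall e f, E (mul e f)},
      (forall x : S * S, E x.1 -> E x.2 ->
         {for x, continuous (fun p : S * S => mul p.1 p.2)}) &
      (forall x, E x -> forall U : set S,
        (exists W : set S, [/\ open W, W x & W `&` E `<=` U]) ->
        exists V : set S, [/\ rel_open E V, V x, V `<=` U &
                              forall a b, V a -> V b -> V (mul a b)])].

(* phi_{f,e} : G_f -> G_e, x |-> e x *)
Definition phi (e : S) (x : S) : S := mul e x.

(* (B3): for every nonempty up-directed D in E(S) with supremum e, the map
   G_e -> lim_{b in D} G_b, g |-> (b g)_{b in D}, is an isomorphism of
   topological groups.  The inverse limit is the set of families
   (h_b)_{b in D} (represented by functions S -> S whose values off D are
   ignored) with h_b in G_b and phi_{b',b}(h_b') = h_b for b <= b' in D,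
   carrying the subspace topology of the product topology. *)
Definition in_invlim (D : set S) (h : S -> S) : Prop :=
  (forall b, D b -> G b (h b)) /\
  (forall b b', D b -> D b' -> sle b b' -> phi b (h b') = h b).

Definition inverse_limit_preserving : Prop :=
  forall D : set S, D `<=` E -> updirected D -> forall e, is_sup D e ->
  [/\
      (forall g g', G e g -> G e g' -> forall b, D b ->
          phi b (mul g g') = mul (phi b g) (phi b g')),
      (forall g g', G e g -> G e g' ->
          (forall b, D b -> phi b g = phi b g') -> g = g') /\
      (forall g, G e g -> in_invlim D (fun b => phi b g)),
      (forall h, in_invlim D h -> exists2 g, G e g & forall b, D b -> phi b g = h b),
      (* continuous (into the product topology) *)
      (forall g, G e g -> forall b, D b -> forall W : set S, open W -> W (phi b g) ->
          exists V : set S, [/\ open V, V g &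
             forall g', G e g' -> V g' -> W (phi b g')]) &
      (* open onto its image (so the inverse is continuous) *)
      (forall g, G e g -> forall V : set S, open V -> V g ->
          exists (F : seq S) (W : S -> set S),
            [/\ {in F, forall b, D b}, {in F, forall b, open (W b) /\ W b (phi b g)} &
                forall g', G e g' -> {in F, forall b, W b (phi b g')} -> V g'])].

Variables (rho : S -> S -> R) (bs : nat -> S) (db : S -> S -> S -> R)
          (c : S -> S) (t : S -> nat -> S).

(* the idempotent component e = x x^{-1} of x = (e, g) *)
Definition idc (x : S) : S := mul x (inv x).

Definition a_ (b e : S) : R :=
  if `[< is_bottom b >] then 1
  else inf [set rho e y | y in [set y | E y /\ ~ waybelow b y]].

Definition phihat (b x : S) : S :=
  if `[< sle b (idc x) >] then mul b x else c b.

Definition P_ (b x y : S) : R :=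
  `|a_ b (idc x) - a_ b (idc y)| +
  rsum (fun k => (2%:R ^+ k.+1)^-1 *
     `|a_ b (idc x) * db b (phihat b x) (t b k.+1)
       - a_ b (idc y) * db b (phihat b y) (t b k.+1)|).

Definition dmetric (x y : S) : R :=
  rho (idc x) (idc y) + rsum (fun j => (2%:R ^+ j.+1)^-1 * P_ (bs j.+1) x y).

End Clifford.

(* The metric d separates the idempotent part e = x x^-1 through rho and, for each
   basis element b, the component b x in G_b through the sequence d_b(b x, t_{b,k}),
   damped by a_b(e) so that the coordinate is continuous where phihat jumps: a_b
   vanishes off the open set {e | b << e} and is positive on it. If d x y = 0 then
   x and y have the same idempotent e, and b x = b y for every basis element
   b << e; these b form a directed set with supremum e, so (B3) gives x = y.
   Every term of the series is continuous in y and the series converges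
   uniformly, so the d-balls are open; conversely compactness of S turns the
   separation property into: every open neighbourhood of x contains a d-ball. *)

From HB Require Import structures.
From mathcomp Require Import all_boot all_order all_algebra.
From mathcomp Require Import all_classical all_reals all_analysis.
From mathcomp Require Import ring lra.
Import Order.TTheory GRing.Theory Num.Theory numFieldNormedType.Exports.
Local Open Scope classical_set_scope.
Local Open Scope ring_scope.
Set Implicit Arguments. Unset Strict Implicit.

Section CliffordAlgebra.
Context {S : topologicalType} (mul : S -> S -> S) (inv : S -> S).
Hypothesis hS : topological_clifford mul inv.

Let mulA : forall x y z, mul x (mul y z) = mul (mul x y) z.
Proof. by case: hS. Qed.
Let mulVK : forall x, mul (mul x (inv x)) x = x /\ mul (mul (inv x) x) (inv x) = inv x.
Proof. by case: hS. Qed.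
Let inv_unique : forall x y, mul (mul x y) x = x -> mul (mul y x) y = y -> y = inv x.
Proof. by case: hS. Qed.
Let idcC : forall x, mul x (inv x) = mul (inv x) x.
Proof. by case: hS. Qed.

Lemma idem_mulKr e u : E mul e -> mul (mul u e) e = mul u e.
Proof. by move=> He; rewrite -mulA He. Qed.

Lemma inv_idem e : E mul e -> inv e = e.
Proof. by move=> He; symmetry; apply: inv_unique; rewrite He He. Qed.

Lemma invK x : inv (inv x) = x.
Proof. by symmetry; apply: inv_unique; case: (mulVK x). Qed.

Lemma idem_idc x : E mul (idc mul inv x).
Proof. by rewrite /E /= /idc mulA (mulVK x).1. Qed.

(* The element x' := (ef)^-1 satisfies x' = f x' e, from which x' is idempotent. *)
Lemma idem_mul e f : E mul e -> E mul f -> E mul (mul e f).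
Proof.
move=> He Hf; set x := mul e f; set x' := inv x.
have [h1 h2] := mulVK x; rewrite -/x' in h1 h2.
have Hy : mul (mul f x') e = x'.
  apply: inv_unique.
  - transitivity (mul (mul x x') x); last exact: h1.
    by rewrite /x !mulA ?idem_mulKr.
  - transitivity (mul (mul f (mul (mul x' x) x')) e); last by rewrite h2.
    by rewrite /x !mulA ?idem_mulKr.
have Hid : E mul x'.
  rewrite /E /= -[in LHS]Hy.
  transitivity (mul (mul f (mul (mul x' x) x')) e); last by rewrite h2 Hy.
  by rewrite /x !mulA ?idem_mulKr.
by rewrite -[x]invK -/x' (inv_idem Hid).
Qed.

Lemma idem_mulC e f : E mul e -> E mul f -> mul e f = mul f e.
Proof.
move=> He Hf; have Hef := idem_mul He Hf; have Hfe := idem_mul Hf He.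
rewrite -(inv_idem Hef); symmetry; apply: inv_unique.
- transitivity (mul (mul e f) (mul e f)); last exact: Hef.
  by rewrite !mulA ?idem_mulKr.
- transitivity (mul (mul f e) (mul f e)); last exact: Hfe.
  by rewrite !mulA ?idem_mulKr.
Qed.

Lemma inv_mul_idem e x : E mul e -> inv (mul x e) = mul e (inv x).
Proof.
move=> He; have [h1 h2] := mulVK x.
have Hf' : E mul (mul (inv x) x) by rewrite -idcC; exact: idem_idc.
have eC := idem_mulC He Hf'.
symmetry; apply: inv_unique.
- transitivity (mul x (mul (mul e (mul (inv x) x)) e)); first by rewrite !mulA ?idem_mulKr.
  rewrite eC.
  transitivity (mul (mul (mul x (inv x)) x) e); first by rewrite !mulA ?idem_mulKr.
  by rewrite h1.
- transitivity (mul (mul e (mul (mul (inv x) x) e)) (inv x)).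
    by rewrite !mulA ?idem_mulKr.
  rewrite -eC.
  transitivity (mul e (mul (mul (inv x) x) (inv x))); first by rewrite !mulA He.
  by rewrite h2.
Qed.

Lemma idem_central e x : E mul e -> mul e x = mul x e.
Proof.
move=> He; have [h1 h2] := mulVK x.
have Hf' : E mul (mul (inv x) x) by rewrite -idcC; exact: idem_idc.
have eC := idem_mulC He Hf'.
have k := idcC (mul x e); rewrite inv_mul_idem // in k.
have s1 : mul e x = mul (mul (mul e (inv x)) (mul x e)) x.
  transitivity (mul (mul (mul (mul (inv x) x) e) e) x); last by rewrite -eC !mulA.
  by rewrite idem_mulKr // -eC -mulA -idcC h1.
rewrite s1 -k.
transitivity (mul x (mul e (mul (inv x) x))); first by rewrite !mulA ?idem_mulKr.
by rewrite eC mulA [mul x (mul _ _)]mulA h1.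
Qed.

Lemma G_mul_idem b x : E mul b -> sle mul b (idc mul inv x) -> G mul inv b (mul b x).
Proof.
move=> Hb; rewrite /sle /idc /G /= => hb.
rewrite (idem_central x Hb) inv_mul_idem // !mulA idem_mulKr // -mulA.
by rewrite (idem_central (inv x) Hb) mulA -(idem_central (mul x (inv x)) Hb).
Qed.

End CliffordAlgebra.

Section Topology.
Context {T U : topologicalType}.

Lemma continuous_comp2 (op : U -> U -> U) (f g : T -> U) :
  continuous (fun p : U * U => op p.1 p.2) -> continuous f -> continuous g ->
  continuous (fun w => op (f w) (g w)).
Proof.
by move=> hop hf hg w; apply: continuous2_cvg; [exact: (hop (f w, g w))|exact: hf|exact: hg].
Qed.

Lemma closed_equalizer (f g : T -> U) : hausdorff_space U ->
  continuous f -> continuous g -> closed [set w | f w = g w].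
Proof.
move=> hT2 /continuousP hf /continuousP hg; rewrite -openC openE => x /= nfx.
have /eqP ne := nfx; move: hT2; rewrite open_hausdorff => /(_ _ _ ne).
move=> [[A B] /= [fA gB] [oA oB /eqP AB0]].
rewrite /interior nbhsE /=; exists (f @^-1` A `&` g @^-1` B).
  by split; [exact: openI (hf _ oA) (hg _ oB)|split; exact: set_mem].
move=> y [Ay By] efg; have : (A `&` B) (f y) by split => //; rewrite efg.
by rewrite AB0.
Qed.

Lemma compact_directed_meet (I : Type) (D : set I) (f : I -> set T) :
  compact [set: T] -> (exists i, D i) ->
  (forall i j, D i -> D j -> exists2 k, D k & f k `<=` f i `&` f j) ->
  (forall i, D i -> closed (f i)) -> (forall i, D i -> f i !=set0) ->
  exists p, forall i, D i -> f i p.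
Proof.
move=> hcpt hD hdir hcl hne.
have FF := filter_from_filter hD hdir; have PF := filter_from_proper FF hne.
have [p [_ cp]] := hcpt _ PF (@filterT _ _ FF).
exists p => i Di; rewrite clusterE in cp.
have := cp (f i); rewrite -(closure_id (f i)).1; last exact: hcl.
by apply; exists i.
Qed.

End Topology.

Section CompatibleMetric.
Context {R : realType} {S : topologicalType} (A : set S) (m : S -> S -> R).
Hypothesis hm : compatible_metric A m.

Lemma cm_ge0 x y : A x -> A y -> 0 <= m x y.
Proof. by move=> Ax Ay; case: (hm.1 x y x Ax Ay Ax). Qed.

Lemma cm_sym x y : A x -> A y -> m x y = m y x.
Proof. by move=> Ax Ay; case: (hm.1 x y x Ax Ay Ax). Qed.

Lemma cm_triangle x y z : A x -> A y -> A z -> m x z <= m x y + m y z.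
Proof. by move=> Ax Ay Az; case: (hm.1 x y z Ax Ay Az). Qed.

Lemma cm_eq0 x y : A x -> A y -> m x y = 0 <-> x = y.
Proof. by move=> Ax Ay; case: (hm.1 x y x Ax Ay Ax). Qed.

Lemma cm_dist_lipschitz x y z : A x -> A y -> A z -> `|m x z - m y z| <= m x y.
Proof.
move=> Ax Ay Az; have := cm_triangle Ax Ay Az; have := cm_triangle Ay Ax Az.
rewrite (cm_sym Ay Ax) => h1 h2; rewrite ler_norml; apply/andP; split; lra.
Qed.

Lemma cm_ball_nbhs x eps : A x -> 0 < eps -> \forall y \near x, A y -> m x y < eps.
Proof.
move=> Ax e0; have [_ /(_ (ex_intro _ eps (conj e0 (fun _ h => h))))] :=
  hm.2 x Ax [set y | A y /\ m x y < eps].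
move=> [W [oW Wx sW]]; apply: (@filterS _ _ _ W); last exact: open_nbhs_nbhs.
by move=> y Wy Ay; case: (sW y).
Qed.

Lemma cm_ball_sub_open x W : A x -> open W -> W x ->
  exists2 eps, 0 < eps & forall y, A y -> m x y < eps -> W y.
Proof.
move=> Ax oW Wx; have [h _] := hm.2 x Ax W.
have [|eps [e0 h']] := h; first by exists W; split => // y [].
by exists eps => // y Ay hy; apply: h'.
Qed.

Lemma cm_closed_ball x r : closed A -> A x -> closed [set y | A y /\ m x y <= r].
Proof.
move=> cA Ax; rewrite -openC openE => y /= ny.
have [Ay|nAy] := pselect (A y); last first.
  apply: (@filterS _ _ _ (~` A)); first by move=> z nAz [].
  by apply: open_nbhs_nbhs; split => //; rewrite openC.
have gt : 0 < m x y - r by rewrite subr_gt0 ltNge; apply/negP => h; exact: ny.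
apply: filterS (cm_ball_nbhs Ay gt) => z ball [Az hz].
have := cm_triangle Ax Az Ay; have := ball Az.
by rewrite (cm_sym Ay Az); lra.
Qed.

Lemma cm_continuous (U : topologicalType) (g : U -> S) (f : U -> R) y0 :
  A (g y0) -> {for y0, continuous g} ->
  (\forall y \near y0, A (g y) /\ `|f y0 - f y| <= m (g y0) (g y)) ->
  {for y0, continuous f}.
Proof.
move=> Ag0 cg near_lip; apply/cvgrPdist_lt => eps e0.
apply: filterS2 near_lip (cg _ (cm_ball_nbhs Ag0 e0)) => y [Agy lip] /(_ Agy).
exact: le_lt_trans.
Qed.

Lemma cm_dense_seq_separates (s : nat -> S) u v : dense_seq A s -> A u -> A v ->
  (forall k, m u (s k) = m v (s k)) -> u = v.
Proof.
move=> [As dense] Au Av huv; apply/(cm_eq0 Au Av).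
have := cm_ge0 Au Av; rewrite le_eqVlt => /orP [/eqP <- //|duv]; exfalso.
have e2 : 0 < m u v / 2 by apply: divr_gt0.
move: (cm_ball_nbhs Au e2); rewrite /prop_near1 nbhsE => -[W [oW Wu] sW].
have [k Wk] := dense u Au W oW Wu.
have := cm_triangle Au (As k) Av; have := sW _ Wk (As k).
by rewrite (cm_sym (As k) Av) -huv; lra.
Qed.

End CompatibleMetric.

Section DyadicSeries.
Context {R : realType}.

Definition halfpow (n : nat) : R := (2%:R ^+ n)^-1.

Definition dyadic_bounded (M : R) (u : nat -> R) :=
  forall k, 0 <= u k /\ u k <= M * halfpow k.+1.

Lemma halfpow_gt0 n : 0 < halfpow n.
Proof. by rewrite /halfpow invr_gt0 exprn_gt0. Qed.

Lemma halfpowS n : halfpow n.+1 = halfpow n / 2.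
Proof. by rewrite /halfpow exprS invfM mulrC. Qed.

Lemma halfpow0 : halfpow 0 = 1.
Proof. by rewrite /halfpow expr0 invr1. Qed.

Lemma halfpow_small M eps : 0 < eps -> exists n, M * halfpow n < eps.
Proof.
move=> e0; have [M0|M0] := leP M 0; first by exists 0%N; rewrite halfpow0; lra.
set n := (Num.truncn (M / eps)).+1.
have h1 : M / eps < n%:R by apply: truncnS_gt.
have h2 : (n%:R : R) <= 2%:R ^+ n.
  by rewrite -natrX ler_nat; apply: ltnW; apply: ltn_expl.
exists n; rewrite /halfpow ltr_pdivrMr ?exprn_gt0 //.
have : M < eps * n%:R by rewrite -ltr_pdivrMl // mulrC.
nra.
Qed.

Lemma dyadic_bounded_weighted (g : nat -> R) M : (forall k, 0 <= g k /\ g k <= M) ->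
  dyadic_bounded M (fun k => halfpow k.+1 * g k).
Proof.
move=> hg k /=; have [h1 h2] := hg k; have c0 := halfpow_gt0 k.+1.
by split; [exact: mulr_ge0 (ltW c0) h1|rewrite [halfpow _ * _]mulrC ler_pM2r].
Qed.

Lemma dyadic_boundedD M M' u v : dyadic_bounded M u -> dyadic_bounded M' v ->
  dyadic_bounded (M + M') (fun k => u k + v k).
Proof. by move=> hu hv k; have [? ?] := hu k; have [? ?] := hv k; split; lra. Qed.

Section Bounded.
Variables (M : R) (u : nat -> R).
Hypothesis hu : dyadic_bounded M u.

Lemma dyadic_bounded_ge0 : 0 <= M.
Proof. by have [h1 h2] := hu 0; have := halfpow_gt0 1; nra. Qed.

Lemma psum_nondecreasing : nondecreasing_seq (fun n => \sum_(k < n) u k).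
Proof. by apply/nondecreasing_seqP => n; rewrite big_ord_recr lerDl; case: (hu n). Qed.

Lemma psum_tail_le m n : (m <= n)%N ->
  \sum_(k < n) u k + M * halfpow n <= \sum_(k < m) u k + M * halfpow m.
Proof.
elim: n => [|n IH]; first by rewrite leqn0 => /eqP ->.
rewrite leq_eqVlt => /orP [/eqP ->//|]; rewrite ltnS => /IH.
rewrite big_ord_recr /= halfpowS; have [h1 h2] := hu n; move: h2.
by rewrite halfpowS; lra.
Qed.

Lemma psum_le m n : (m <= n)%N -> \sum_(k < n) u k <= \sum_(k < m) u k + M * halfpow m.
Proof. by move=> /psum_tail_le; have := dyadic_bounded_ge0; have := halfpow_gt0 n; nra. Qed.

Lemma dyadic_cvg : cvgn (fun n => \sum_(k < n) u k).
Proof.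
apply: nondecreasing_is_cvgn; first exact: psum_nondecreasing.
exists M => _ [n _ <-]; have := psum_le (leq0n n).
by rewrite big_ord0 halfpow0; lra.
Qed.

Lemma psum_le_rsum n : \sum_(k < n) u k <= rsum u.
Proof. exact: (nondecreasing_cvgn_le psum_nondecreasing dyadic_cvg). Qed.

Lemma rsum_le_psum m : rsum u <= \sum_(k < m) u k + M * halfpow m.
Proof. by apply: limr_le; [exact: dyadic_cvg|exists m => // n /= /psum_le]. Qed.

Lemma rsum_ge0 : 0 <= rsum u.
Proof. by have := psum_le_rsum 0; rewrite big_ord0. Qed.

Lemma rsum_le_bound : rsum u <= M.
Proof. by have := rsum_le_psum 0; rewrite big_ord0 halfpow0; lra. Qed.

Lemma rsum_eq0 : rsum u = 0 -> forall k, u k = 0.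
Proof.
move=> h0 k; have := psum_le_rsum k.+1; rewrite h0 big_ord_recr /=.
have := psum_nondecreasing (leq0n k); rewrite big_ord0 /=.
by have [h _] := hu k; lra.
Qed.

End Bounded.

Lemma ler_rsum M M' u v : dyadic_bounded M u -> dyadic_bounded M' v ->
  (forall k, u k <= v k) -> rsum u <= rsum v.
Proof.
move=> hu hv huv; apply: ler_lim; [exact: dyadic_cvg hu|exact: dyadic_cvg hv|].
by near=> n; apply: ler_sum => i _; apply: huv.
Unshelve. all: by end_near.
Qed.

Lemma rsumD M M' u v : dyadic_bounded M u -> dyadic_bounded M' v ->
  rsum (fun k => u k + v k) = rsum u + rsum v.
Proof.
move=> hu hv; rewrite /rsum; under eq_fun do rewrite big_split.
by apply: limD; [exact: dyadic_cvg hu|exact: dyadic_cvg hv].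
Qed.

Lemma rsum0 : rsum (fun _ => 0 : R) = 0.
Proof.
have h : dyadic_bounded 0 (fun _ => 0 : R) by move=> k; rewrite mul0r.
by apply/eqP; rewrite eq_le (rsum_le_bound h) (rsum_ge0 h).
Qed.

(* The tails beyond [n] are uniformly bounded by [M * halfpow n]. *)
Lemma continuous_weighted_rsum (U : topologicalType) (g : nat -> U -> R) M y0 :
  (forall k y, 0 <= g k y /\ g k y <= M) -> (forall k, {for y0, continuous (g k)}) ->
  {for y0, continuous (fun y => rsum (fun k => halfpow k.+1 * g k y))}.
Proof.
move=> hb hg; pose ps n y := \sum_(k < n) halfpow k.+1 * g k y.
have cps n : {for y0, continuous (ps n)}.
  elim: n => [|n IH].
    have -> : ps 0%N = cst 0 by apply: funext => y; rewrite /ps big_ord0.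
    exact: cvg_cst.
  have -> : ps n.+1 = ps n \+ (fun y => halfpow n.+1 * g n y).
    by apply: funext => y; rewrite /ps big_ord_recr.
  by apply: cvgD => //; apply: cvgM; [exact: cvg_cst|exact: hg].
apply/cvgrPdist_lt => eps e0; have e3 : 0 < eps / 3 by apply: divr_gt0.
have [n hn] := halfpow_small M e3.
apply: filterS ((cvgrPdist_lt _ _).1 (cps n) _ e3) => y.
have gy := dyadic_bounded_weighted (hb^~ y); have gy0 := dyadic_bounded_weighted (hb^~ y0).
have := psum_le_rsum gy n; have := rsum_le_psum gy n.
have := psum_le_rsum gy0 n; have := rsum_le_psum gy0 n.
rewrite /ps !ltr_norml => h1 h2 h3 h4 /andP [h5 h6].
by apply/andP; split; lra.
Qed.

End DyadicSeries.

Section SemilatticeTopology.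
Context {S : topologicalType} (mul : S -> S -> S) (inv : S -> S).
Hypotheses (hS : topological_clifford mul inv) (hcpt : compact [set: S])
  (hT2 : hausdorff_space S).

Let mulA : forall x y z, mul x (mul y z) = mul (mul x y) z.
Proof. by case: hS. Qed.
Let continuous_mul : continuous (fun p : S * S => mul p.1 p.2).
Proof. by case: hS => _ _ _ _ []. Qed.
Let continuous_inv : continuous inv.
Proof. by case: hS => _ _ _ _ []. Qed.
Let continuous_id : continuous (fun w : S => w).
Proof. by move=> ?. Qed.

Lemma continuous_lmul a : continuous (mul a).
Proof.
exact: (continuous_comp2 (f := fun=> a) (g := id) continuous_mul
  (cst_continuous (x := a)) continuous_id).
Qed.

Lemma continuous_rmul a : continuous (mul^~ a).
Proof.
exact: (continuous_comp2 (f := id) (g := fun=> a) continuous_mul continuous_id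
  (cst_continuous (x := a))).
Qed.

Lemma continuous_idc : continuous (idc mul inv).
Proof. exact: (continuous_comp2 (f := id) continuous_mul continuous_id continuous_inv). Qed.

Lemma closed_idem : closed (E mul).
Proof.
exact: (closed_equalizer (f := fun w => mul w w) (g := id) hT2
  (continuous_comp2 (f := id) (g := id) continuous_mul continuous_id continuous_id)
  continuous_id).
Qed.

Lemma closed_sle_up z : closed [set w | sle mul z w].
Proof.
exact: (closed_equalizer (f := mul z) (g := fun=> z) hT2 (continuous_lmul (a := z))
  (cst_continuous (x := z))).
Qed.

Lemma closed_sle_down v : closed [set w | sle mul w v].
Proof.
exact: (closed_equalizer (f := mul^~ v) (g := id) hT2 (continuous_rmul (a := v))
  continuous_id).
Qed.

Lemma sle_trans a b c : sle mul a b -> sle mul b c -> sle mul a c.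
Proof. by rewrite /sle => hab hbc; rewrite -hab -mulA hbc. Qed.

Lemma sle_antisym a b : E mul a -> E mul b -> sle mul a b -> sle mul b a -> a = b.
Proof. by rewrite /sle => Ea Eb hab hba; rewrite -hab (idem_mulC hS Ea Eb). Qed.

Lemma waybelow_sle b y : E mul y -> waybelow mul b y -> sle mul b y.
Proof.
move=> Ey hw; have h1 : [set y] `<=` E mul by move=> z ->.
have h2 : updirected mul [set y] by split; [exists y|move=> a a' -> ->; exists y].
have h3 : is_sup mul [set y] y by split => // [d -> //|u _ /(_ y erefl)].
by have [d -> //] := hw [set y] h1 h2 y h3 Ey.
Qed.

Lemma sle_waybelow_trans a b c : sle mul a b -> waybelow mul b c -> waybelow mul a c.
Proof.
move=> hab hw D DE dD s sD hcs; have [d Dd hbd] := hw D DE dD s sD hcs.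
by exists d => //; exact: sle_trans hab hbd.
Qed.

Lemma directed_sup_eventually D s Q : D `<=` E mul -> updirected mul D ->
  is_sup mul D s -> open Q -> Q s ->
  exists2 d0, D d0 & forall d, D d -> sle mul d0 d -> Q d.
Proof.
move=> DE [[d1 Dd1] dD] [Es ubs lubs] oQ Qs; apply: contrapT => hn.
pose f d0 := [set w | sle mul d0 w] `&` ~` Q `&` E mul `&` [set w | sle mul w s].
have [p hp] : exists p, forall i, D i -> f i p.
  apply: (compact_directed_meet hcpt (ex_intro _ d1 Dd1)).
  - move=> i j Di Dj; have [k [Dk hik hjk]] := dD i j Di Dj.
    by exists k => // w [[[hkw nQw] Ew] hws]; split; do ![split] => //;
      exact: sle_trans hkw.
  - move=> i Di; apply: closedI; last exact: closed_sle_down.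
    apply: closedI; last exact: closed_idem.
    by apply: closedI; [exact: closed_sle_up|exact: open_closedC].
  - move=> i Di; apply: contrapT => hx; apply: hn; exists i => // d Dd hid.
    apply: contrapT => nQd; apply: hx; exists d.
    by do ![split] => //; [exact: DE|exact: ubs].
have [[[_ nQp] Ep] ps] := hp d1 Dd1.
have sp : sle mul s p by apply: lubs => // d /hp [[[]]].
by apply: nQp; rewrite (sle_antisym Ep Es ps sp).
Qed.

End SemilatticeTopology.

Section PerfectSemilattice.
Context {R : realType} {S : topologicalType} (mul : S -> S -> S) (inv : S -> S).
Hypotheses (hS : topological_clifford mul inv) (hcpt : compact [set: S])
  (hT2 : hausdorff_space S) (hP : perfect_semilattice mul).
Variable rho : S -> S -> R.
Hypothesis hrho : compatible_metric (E mul) rho.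

Let mulA : forall x y z, mul x (mul y z) = mul (mul x y) z.
Proof. by case: hS. Qed.

Definition subsemilattice_nbhd (e : S) (V : set S) :=
  [/\ rel_open (E mul) V, V e & forall a c, V a -> V c -> V (mul a c)].

Lemma subsemilattice_nbhd_idem e V : subsemilattice_nbhd e V -> V `<=` E mul.
Proof. by move=> [[W [_ ->]] _ _] y []. Qed.

Lemma subsemilattice_nbhdI e V1 V2 : subsemilattice_nbhd e V1 ->
  subsemilattice_nbhd e V2 -> subsemilattice_nbhd e (V1 `&` V2).
Proof.
move=> [[W1 [oW1 ->]] Ve1 m1] [[W2 [oW2 ->]] Ve2 m2]; split => //.
- by exists (W1 `&` W2); split; [exact: openI|rewrite setIACA setIid].
- by move=> a c [Va1 Va2] [Vc1 Vc2]; split; [exact: m1|exact: m2].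
Qed.

Lemma subsemilattice_nbhd_in_ball e r : E mul e -> 0 < r ->
  exists2 V, subsemilattice_nbhd e V & V `<=` [set y | E mul y /\ rho e y < r].
Proof.
move=> Ee r0; case: hP => _ _ _ /(_ e Ee [set y | rho e y < r]) hbasis.
have [|V [rV Ve sV mV]] := hbasis.
  by apply: (hrho.2 e Ee _).2; exists r; split => // y [].
have hV : subsemilattice_nbhd e V by [].
by exists V => // y Vy; split; [exact: subsemilattice_nbhd_idem hV _ Vy|exact: sV].
Qed.

Lemma subsemilattice_nbhd_lower_bound e V K Z : subsemilattice_nbhd e V ->
  closed K -> V `<=` K -> Z `<=` E mul -> (forall z v, Z z -> V v -> sle mul z v) ->
  exists z, [/\ E mul z, K z, (forall v, V v -> sle mul z v)
              & forall z', Z z' -> sle mul z' z].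
Proof.
move=> gV cK sVK ZE hZ; have VE := subsemilattice_nbhd_idem gV.
case: gV => _ Ve mV.
pose f v := [set w | sle mul w v] `&` (\bigcap_(z in Z) [set w | sle mul z w])
   `&` E mul `&` K.
have [p hp] : exists p, forall v, V v -> f v p.
  apply: (compact_directed_meet hcpt (ex_intro _ e Ve)).
  - move=> v1 v2 V1 V2; exists (mul v1 v2); first exact: mV.
    have ev1 : mul v1 v1 = v1 := VE _ V1.
    move=> w [[[hw' hZw] Ew] Kw]; have hw : mul w (mul v1 v2) = w := hw'.
    split; (split; [split; [split|]|] => //); rewrite /= /sle -[in LHS]hw -!mulA.
      by rewrite (idem_mulC hS (VE _ V2) (VE _ V1)) [mul v1 (mul v1 v2)]mulA ev1 hw.
    by rewrite (VE _ V2) hw.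
  - move=> v Vv; apply: closedI => //; apply: closedI; last exact: (closed_idem hS hT2).
    apply: closedI; first exact: (closed_sle_down hS hT2 (v := v)).
    by apply: closed_bigI => z _; exact: (closed_sle_up hS hT2 (z := z)).
  - by move=> v Vv; exists v; do ![split] => //; [exact: VE|
      move=> z Zz; exact: hZ z v Zz Vv|exact: VE|exact: sVK].
have [[[_ hZp] Ep] Kp] := hp e Ve.
by exists p; split => // v /hp [[[]]].
Qed.

Definition nbhd_lower_bounds (e : S) := [set z | E mul z /\
  exists2 V, subsemilattice_nbhd e V & forall v, V v -> sle mul z v].

Lemma updirected_nbhd_lower_bounds e : E mul e -> updirected mul (nbhd_lower_bounds e).
Proof.
move=> Ee; split.
  have [V gV _] := subsemilattice_nbhd_in_ball Ee ltr01.
  have [z [Ez _ hz _]] := subsemilattice_nbhd_lower_bound gV closedT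
    (fun _ _ => I) (sub0set _) (fun z v (z0 : set0 z) => False_ind _ z0).
  by exists z; split => //; exists V.
move=> z1 z2 [Ez1 [V1 gV1 h1]] [Ez2 [V2 gV2 h2]].
have gV := subsemilattice_nbhdI gV1 gV2.
have ZE : [set z1; z2] `<=` E mul by move=> w [->|->].
have Zlow : forall z v, [set z1; z2] z -> (V1 `&` V2) v -> sle mul z v.
  by move=> w v [->|->] [? ?]; auto.
have [z [Ez _ hz hz']] :=
  subsemilattice_nbhd_lower_bound gV closedT (fun _ _ => I) ZE Zlow.
by exists z; split; [split => //; exists (V1 `&` V2)|apply: hz'; left|apply: hz'; right].
Qed.

Lemma is_sup_nbhd_lower_bounds e : E mul e -> is_sup mul (nbhd_lower_bounds e) e.
Proof.
move=> Ee; split => //; first by move=> z [Ez [V [_ Ve _] hz]]; apply: hz.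
move=> u Eu hub; apply: contrapT => ne.
have := hT2; rewrite open_hausdorff => hsep.
have ne' : e != mul e u by apply/eqP => h; apply: ne; rewrite /sle -h.
have [[A B] /= [/set_mem eA /set_mem euB] [oA oB /eqP AB0]] := hsep _ _ ne'.
have oQ : open (mul^~ u @^-1` B) := (continuousP _).1 (continuous_rmul hS (a := u)) B oB.
have [eps e0 heps] := cm_ball_sub_open hrho Ee (openI oA oQ) (conj eA euB).
have e2 : 0 < eps / 2 by apply: divr_gt0.
have [V gV sV] := subsemilattice_nbhd_in_ball Ee e2.
have sVK : V `<=` [set y | E mul y /\ rho e y <= eps / 2].
  by move=> y /sV [Ey hy]; split => //; exact: ltW.
have [z [Ez [_ Kz] hz _]] := subsemilattice_nbhd_lower_bound gV
   (cm_closed_ball hrho (closed_idem hS hT2) Ee) sVK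
   (sub0set _) (fun z v (z0 : set0 z) => False_ind _ z0).
have zu : mul z u = z by apply: hub; split => //; exists V.
have [Az Bzu] : (A `&` (mul^~ u @^-1` B)) z by apply: heps => //; lra.
have : (A `&` B) z by split => //; rewrite -zu.
by rewrite AB0.
Qed.

(* The lower bounds of small subsemilattice neighbourhoods of [e] form a directed
   set with supremum [e]; one of them lies above [b], and it stays below every
   idempotent [y] of the corresponding neighbourhood. *)
Lemma waybelow_open b e : E mul e -> waybelow mul b e ->
  exists W, [/\ open W, W e & forall y, W y -> E mul y -> waybelow mul b y].
Proof.
move=> Ee hbe; have LE : nbhd_lower_bounds e `<=` E mul by move=> z [].
have [z [Ez [V [[W [oW VWE]] Ve mV] hz]] hbz] := hbe _ LE
  (updirected_nbhd_lower_bounds Ee) e (is_sup_nbhd_lower_bounds Ee) Ee.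
exists W; split => //; first by move: Ve; rewrite VWE => -[].
move=> y Wy Ey; apply: (sle_waybelow_trans hS hbz) => D DE dD s sD ys.
have Ws : (mul y @^-1` W) s by rewrite /= ys.
have oQ := (continuousP _).1 (continuous_lmul hS (a := y)) W oW.
have [d0 Dd0 hd0] := directed_sup_eventually hS hcpt hT2 DE dD sD oQ Ws.
exists d0 => //; have Ed0 : mul d0 d0 = d0 := DE d0 Dd0.
have Vyd : V (mul y d0).
  rewrite VWE; split; first exact: hd0.
  by case: hP => _ hEM _ _; apply: hEM; rewrite inE.
by have := hz _ Vyd; rewrite /sle => h; rewrite -[in LHS]h -!mulA Ed0 h.
Qed.

End PerfectSemilattice.

Section DistanceToComplement.
Context {R : realType} {S : topologicalType} (mul : S -> S -> S) (inv : S -> S).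
Hypotheses (hS : topological_clifford mul inv) (hcpt : compact [set: S])
  (hT2 : hausdorff_space S) (hP : perfect_semilattice mul).
Variable rho : S -> S -> R.
Hypotheses (hrho : compatible_metric (E mul) rho)
  (hrho1 : forall x y, E mul x -> E mul y -> rho x y <= 1).

Local Notation a := (a_ mul rho).
Local Notation compl_up b := [set y | E mul y /\ ~ waybelow mul b y].

Lemma has_lbound_dist_compl_up b e : E mul e -> has_lbound [set rho e y | y in compl_up b].
Proof. by move=> Ee; exists 0 => _ [y [Ey _] <-]; exact: (cm_ge0 hrho Ee Ey). Qed.

Lemma a_bounds b e : E mul e -> 0 <= a b e /\ a b e <= 1.
Proof.
move=> Ee; rewrite /a_; case: asboolP => hb; first by split; lra.
have [[y Yy]|hn] := pselect (compl_up b !=set0); last first.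
  rewrite (_ : compl_up b = set0) ?image_set0 ?inf0; first by split; lra.
  by apply/seteqP; split => z // hz; apply: hn; exists z.
have lb := has_lbound_dist_compl_up b Ee; have inf_le := ge_inf lb (imageP _ Yy).
split; last by have := hrho1 Ee Yy.1; lra.
apply: lb_le_inf; first by exists (rho e y), y.
by move=> _ [z [Ez _] <-]; exact: (cm_ge0 hrho Ee Ez).
Qed.

Lemma a_lipschitz b e e' : E mul e -> E mul e' -> `|a b e - a b e'| <= rho e e'.
Proof.
have a_le e1 e2 : E mul e1 -> E mul e2 -> a b e1 <= a b e2 + rho e1 e2.
  move=> E1 E2; have r0 := cm_ge0 hrho E1 E2.
  rewrite /a_; case: asboolP => hb; first lra.
  have [[y Yy]|hn] := pselect (compl_up b !=set0); last first.
    rewrite (_ : compl_up b = set0) ?image_set0 ?inf0; first lra.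
    by apply/seteqP; split => z // hz; apply: hn; exists z.
  rewrite -lerBlDr; apply: lb_le_inf; first by exists (rho e2 y), y.
  move=> _ [z [Ez hz] <-]; rewrite lerBlDr.
  have := ge_inf (has_lbound_dist_compl_up b E1) (imageP _ (conj Ez hz)).
  by have := cm_triangle hrho E1 E2 Ez; lra.
move=> Ee Ee'; have := a_le _ _ Ee Ee'; have := a_le _ _ Ee' Ee.
by rewrite (cm_sym hrho Ee' Ee) ler_norml => h1 h2; apply/andP; split; lra.
Qed.

Lemma a_gt0 b e : E mul b -> E mul e -> waybelow mul b e -> 0 < a b e.
Proof.
move=> Eb Ee hbe; rewrite /a_; case: asboolP => hb; first lra.
have [[y0 Yy0]|hn] := pselect (compl_up b !=set0); last first.
  exfalso; apply: hb; split => // y Ey.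
  by apply: (waybelow_sle Ey); apply: contrapT => nw; apply: hn; exists y.
have [W [oW We hW]] := waybelow_open hS hcpt hT2 hP hrho Ee hbe.
have [eps e0 heps] := cm_ball_sub_open hrho Ee oW We.
apply: (lt_le_trans e0); apply: lb_le_inf; first by exists (rho e y0), y0.
move=> _ [y [Ey hy] <-]; rewrite leNgt; apply/negP => lt.
by apply: hy; apply: hW => //; apply: heps.
Qed.

Lemma a_gt0_sle b e : E mul e -> 0 < a b e -> sle mul b e.
Proof.
move=> Ee; rewrite /a_; case: asboolP => hb; first by move=> _; apply: hb.2.
have [wb|nw] := pselect (waybelow mul b e); first by move=> _; exact: waybelow_sle Ee wb.
have := ge_inf (has_lbound_dist_compl_up b Ee) (imageP _ (conj Ee nw)).
by rewrite (cm_eq0 hrho Ee Ee).2 //; lra.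
Qed.

End DistanceToComplement.

Section Metric.
Context {R : realType} {S : topologicalType} (mul : S -> S -> S) (inv : S -> S).
Hypotheses (hS : topological_clifford mul inv) (hcpt : compact [set: S])
  (hT2 : hausdorff_space S) (hP : perfect_semilattice mul)
  (B3 : inverse_limit_preserving mul inv).
Variables (rho : S -> S -> R) (bs : nat -> S) (db : S -> S -> S -> R)
  (c : S -> S) (t : S -> nat -> S).
Hypotheses (hrho : compatible_metric (E mul) rho)
  (hrho1 : forall x y, E mul x -> E mul y -> rho x y <= 1)
  (hbs : domain_basis mul [set b | exists j, (0 < j)%N /\ bs j = b])
  (hdb : forall j, (0 < j)%N ->
     compatible_metric (G mul inv (bs j)) (db (bs j)) /\
     forall x y, G mul inv (bs j) x -> G mul inv (bs j) y -> db (bs j) x y <= 1)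
  (hc : forall j, (0 < j)%N -> G mul inv (bs j) (c (bs j)))
  (ht : forall j, (0 < j)%N -> dense_seq (G mul inv (bs j)) (fun k => t (bs j) k.+1)).

Local Notation ic := (idc mul inv).
Local Notation a := (a_ mul rho).
Local Notation ph := (phihat mul inv c).
Local Notation P := (P_ mul inv rho db c t).
Local Notation d := (dmetric mul inv rho bs db c t).

Definition P_coord (b : S) (k : nat) (y : S) : R := a b (ic y) * db b (ph b y) (t b k.+1).

Lemma P_E b x y : P b x y = `|a b (ic x) - a b (ic y)| +
  rsum (fun k => halfpow k.+1 * `|P_coord b k x - P_coord b k y|).
Proof. by []. Qed.

Lemma dmetric_E x y :
  d x y = rho (ic x) (ic y) + rsum (fun j => halfpow j.+1 * P (bs j.+1) x y).
Proof. by []. Qed.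

Lemma idem_bs j : (0 < j)%N -> E mul (bs j).
Proof. by move=> hj; apply: hbs.1; exists j. Qed.

Lemma phihatE b y : sle mul b (ic y) -> ph b y = mul b y.
Proof. by rewrite /phihat; case: asboolP. Qed.

Lemma G_phihat j y : (0 < j)%N -> G mul inv (bs j) (ph (bs j) y).
Proof.
move=> hj; rewrite /phihat; case: asboolP => h; last exact: hc.
exact: (G_mul_idem hS (idem_bs hj) h).
Qed.

Lemma db_bounds j y k : (0 < j)%N -> 0 <= db (bs j) (ph (bs j) y) (t (bs j) k.+1) /\
  db (bs j) (ph (bs j) y) (t (bs j) k.+1) <= 1.
Proof.
move=> hj; have [cm db1] := hdb hj; have Gt := (ht hj).1 k.
by split; [exact: (cm_ge0 cm (G_phihat y hj) Gt)|exact: db1 _ _ (G_phihat y hj) Gt].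
Qed.

Lemma P_coord_bounds j k y : (0 < j)%N -> 0 <= P_coord (bs j) k y /\ P_coord (bs j) k y <= 1.
Proof.
move=> hj; have [a0 a1] := a_bounds hrho hrho1 (bs j) (idem_idc hS y).
by have [d0 d1] := db_bounds y k hj; rewrite /P_coord; split; nra.
Qed.

Lemma dist_P_coord_bounds j k x y : (0 < j)%N ->
  0 <= `|P_coord (bs j) k x - P_coord (bs j) k y| /\
  `|P_coord (bs j) k x - P_coord (bs j) k y| <= 1.
Proof.
move=> hj; have [? ?] := P_coord_bounds k x hj; have [? ?] := P_coord_bounds k y hj.
by split => //; rewrite ler_norml; apply/andP; split; lra.
Qed.

Lemma P_bounds j x y : (0 < j)%N -> 0 <= P (bs j) x y /\ P (bs j) x y <= 2.
Proof.
move=> hj; rewrite P_E.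
have g := dyadic_bounded_weighted (fun k => dist_P_coord_bounds k x y hj).
have := rsum_ge0 g; have := rsum_le_bound g.
have [? ?] := a_bounds hrho hrho1 (bs j) (idem_idc hS x).
have [? ?] := a_bounds hrho hrho1 (bs j) (idem_idc hS y).
have : `|a (bs j) (ic x) - a (bs j) (ic y)| <= 1.
  by rewrite ler_norml; apply/andP; split; lra.
by have := normr_ge0 (a (bs j) (ic x) - a (bs j) (ic y)); split; lra.
Qed.

Lemma dyadic_bounded_P x y : dyadic_bounded 2 (fun j => halfpow j.+1 * P (bs j.+1) x y).
Proof. exact: dyadic_bounded_weighted (fun j => P_bounds x y (ltn0Sn j)). Qed.

Lemma continuous_a_idc b y0 : {for y0, continuous (fun y => a b (ic y))}.
Proof.
apply: (cm_continuous hrho (g := ic) (idem_idc hS y0) (continuous_idc hS (x := y0))).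
apply: nearW => y; split; first exact: idem_idc.
exact: (a_lipschitz hrho b (idem_idc hS y0) (idem_idc hS y)).
Qed.

Lemma continuous_rho_idc x y0 : {for y0, continuous (fun y => rho (ic x) (ic y))}.
Proof.
apply: (cm_continuous hrho (g := ic) (idem_idc hS y0) (continuous_idc hS (x := y0))).
apply: nearW => y; split; first exact: idem_idc.
have Ex := idem_idc hS x; have Ey0 := idem_idc hS y0; have Ey := idem_idc hS y.
by rewrite (cm_sym hrho Ex Ey0) (cm_sym hrho Ex Ey); exact: (cm_dist_lipschitz hrho).
Qed.

(* Where [a_b] vanishes the coordinate is squeezed to [0]; where it is
   positive, [phihat] is locally the continuous map [g |-> b g]. *)
Lemma continuous_P_coord j k y0 : (0 < j)%N -> {for y0, continuous (P_coord (bs j) k)}.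
Proof.
move=> hj; have ca := continuous_a_idc (b := bs j) (y0 := y0).
have [a0 _] := a_bounds hrho hrho1 (bs j) (idem_idc hS y0).
move: a0; rewrite le_eqVlt => /orP [/eqP a0|apos].
  apply/cvgrPdist_lt => eps e0; apply: filterS ((cvgrPdist_lt _ _).1 ca _ e0) => y.
  rewrite /P_coord -a0 mul0r !sub0r !normrN.
  have [ay0 _] := a_bounds hrho hrho1 (bs j) (idem_idc hS y).
  have [dy0 dy1] := db_bounds y k hj.
  by rewrite normrM (ger0_norm ay0) (ger0_norm dy0); nra.
have near_pos : \forall y \near y0, sle mul (bs j) (ic y).
  apply: filterS ((cvgrPdist_lt _ _).1 ca _ apos) => y.
  rewrite ltr_norml => /andP [_ h]; apply: (a_gt0_sle hrho (idem_idc hS y)); lra.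
have [cm _] := hdb hj; have Eb := idem_bs hj; have Gt := (ht hj).1 k.
have sb0 : sle mul (bs j) (ic y0) := nbhs_singleton near_pos.
have G0 := G_mul_idem hS Eb sb0.
have cdb : {for y0, continuous (fun y => db (bs j) (mul (bs j) y) (t (bs j) k.+1))}.
  apply: (cm_continuous cm (g := mul (bs j)) G0 (continuous_lmul hS (a := bs j) (x := y0))).
  apply: filterS near_pos => y sb; have Gy := G_mul_idem hS Eb sb.
  by split => //; exact: (cm_dist_lipschitz cm G0 Gy Gt).
have eq_near : {near y0, (fun y => a (bs j) (ic y) *
    db (bs j) (mul (bs j) y) (t (bs j) k.+1)) =1 P_coord (bs j) k}.
  by apply: filterS near_pos => y sb; rewrite /P_coord phihatE.
apply: cvg_trans (near_eq_cvg eq_near) _.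
by rewrite /P_coord (phihatE sb0); apply: cvgM.
Qed.

Lemma continuous_P j x y0 : (0 < j)%N -> {for y0, continuous (P (bs j) x)}.
Proof.
move=> hj; apply: cvgD.
  by apply: cvg_norm; apply: cvgB; [exact: cvg_cst|exact: continuous_a_idc].
apply: (continuous_weighted_rsum (M := 1)) => [k y|k].
  exact: dist_P_coord_bounds.
by apply: cvg_norm; apply: cvgB; [exact: cvg_cst|exact: continuous_P_coord].
Qed.

Lemma continuous_dmetric x : continuous (d x).
Proof.
move=> y0; apply: cvgD; first exact: continuous_rho_idc.
apply: (continuous_weighted_rsum (M := 2)) => [k y|k]; first exact: P_bounds.
exact: continuous_P.
Qed.

Lemma P_xx b x : P b x x = 0.
Proof.
rewrite P_E subrr normr0 add0r -[RHS]rsum0; congr rsum.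
by apply: funext => k; rewrite subrr normr0 mulr0.
Qed.

Lemma P_sym b x y : P b x y = P b y x.
Proof. by rewrite !P_E distrC; congr (_ + rsum _); apply: funext => k; rewrite distrC. Qed.

Lemma P_triangle j x y z : (0 < j)%N -> P (bs j) x z <= P (bs j) x y + P (bs j) y z.
Proof.
move=> hj; rewrite !P_E.
have g1 := dyadic_bounded_weighted (fun k => dist_P_coord_bounds k x y hj).
have g2 := dyadic_bounded_weighted (fun k => dist_P_coord_bounds k y z hj).
have g3 := dyadic_bounded_weighted (fun k => dist_P_coord_bounds k x z hj).
have le : rsum (fun k => halfpow k.+1 * `|P_coord (bs j) k x - P_coord (bs j) k z|) <=
    rsum (fun k => halfpow k.+1 * `|P_coord (bs j) k x - P_coord (bs j) k y| +
                   halfpow k.+1 * `|P_coord (bs j) k y - P_coord (bs j) k z|).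
  apply: (ler_rsum g3 (dyadic_boundedD g1 g2)) => k.
  by rewrite -mulrDr ler_wpM2l ?(ltW (halfpow_gt0 _)) ?ler_distD.
rewrite (rsumD g1 g2) in le.
by have := ler_distD (a (bs j) (ic y)) (a (bs j) (ic x)) (a (bs j) (ic z)); lra.
Qed.

Lemma dmetric_ge0 x y : 0 <= d x y.
Proof.
rewrite dmetric_E; have := rsum_ge0 (dyadic_bounded_P x y).
by have := cm_ge0 hrho (idem_idc hS x) (idem_idc hS y); lra.
Qed.

Lemma dmetric_xx x : d x x = 0.
Proof.
rewrite dmetric_E (cm_eq0 hrho (idem_idc hS x) (idem_idc hS x)).2 // add0r -[RHS]rsum0.
by congr rsum; apply: funext => j; rewrite P_xx mulr0.
Qed.

Lemma dmetric_sym x y : d x y = d y x.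
Proof.
rewrite !dmetric_E (cm_sym hrho (idem_idc hS x) (idem_idc hS y)).
by congr (_ + rsum _); apply: funext => j; rewrite P_sym.
Qed.

Lemma dmetric_triangle x y z : d x z <= d x y + d y z.
Proof.
rewrite !dmetric_E.
have le : rsum (fun j => halfpow j.+1 * P (bs j.+1) x z) <=
    rsum (fun j => halfpow j.+1 * P (bs j.+1) x y + halfpow j.+1 * P (bs j.+1) y z).
  apply: (ler_rsum (dyadic_bounded_P x z)
    (dyadic_boundedD (dyadic_bounded_P x y) (dyadic_bounded_P y z))) => j.
  by rewrite -mulrDr ler_wpM2l ?(ltW (halfpow_gt0 _)) ?P_triangle.
rewrite (rsumD (dyadic_bounded_P x y) (dyadic_bounded_P y z)) in le.
by have := cm_triangle hrho (idem_idc hS x) (idem_idc hS y) (idem_idc hS z); lra.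
Qed.

Lemma dmetric_eq0_idc x y : d x y = 0 -> ic x = ic y.
Proof.
rewrite dmetric_E => d0; apply/(cm_eq0 hrho (idem_idc hS x) (idem_idc hS y)).
have := rsum_ge0 (dyadic_bounded_P x y).
by have := cm_ge0 hrho (idem_idc hS x) (idem_idc hS y); lra.
Qed.

Lemma dmetric_eq0_P x y j : d x y = 0 -> (0 < j)%N -> P (bs j) x y = 0.
Proof.
rewrite dmetric_E => d0; case: j => // j _.
have hs : rsum (fun j => halfpow j.+1 * P (bs j.+1) x y) = 0.
  have := rsum_ge0 (dyadic_bounded_P x y).
  by have := cm_ge0 hrho (idem_idc hS x) (idem_idc hS y); lra.
have /eqP := rsum_eq0 (dyadic_bounded_P x y) hs j.
by rewrite mulf_eq0 gt_eqF ?halfpow_gt0 // => /eqP.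
Qed.

Lemma P_eq0_P_coord j x y k : (0 < j)%N -> P (bs j) x y = 0 ->
  P_coord (bs j) k x = P_coord (bs j) k y.
Proof.
move=> hj; rewrite P_E => P0.
have g := dyadic_bounded_weighted (fun k => dist_P_coord_bounds k x y hj).
have hz : rsum (fun k => halfpow k.+1 * `|P_coord (bs j) k x - P_coord (bs j) k y|) = 0.
  have := rsum_ge0 g; have := normr_ge0 (a (bs j) (ic x) - a (bs j) (ic y)); lra.
have /eqP := rsum_eq0 g hz k.
by rewrite mulf_eq0 gt_eqF ?halfpow_gt0 //= normr_eq0 subr_eq0 => /eqP.
Qed.

Lemma P_coord_inj j x y : (0 < j)%N -> ic x = ic y -> 0 < a (bs j) (ic x) ->
  (forall k, P_coord (bs j) k x = P_coord (bs j) k y) -> mul (bs j) x = mul (bs j) y.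
Proof.
move=> hj exy apos hk; have [cm _] := hdb hj.
have sbx : sle mul (bs j) (ic x) := a_gt0_sle hrho (idem_idc hS x) apos.
have sby : sle mul (bs j) (ic y) by rewrite -exy.
apply: (cm_dense_seq_separates cm (ht hj)); [exact: (G_mul_idem hS (idem_bs hj) sbx)|
  exact: (G_mul_idem hS (idem_bs hj) sby)|] => k.
have := hk k; rewrite /P_coord (phihatE sbx) (phihatE sby) -exy.
by move/(mulfI (lt0r_neq0 apos)).
Qed.

Lemma dmetric_eq0 x y : d x y = 0 -> x = y.
Proof.
move=> d0; have exy := dmetric_eq0_idc d0.
have [Ddir Dsup] := hbs.2 _ (idem_idc hS x).
have DE : [set b | [set b | exists j, (0 < j)%N /\ bs j = b] b /\ waybelow mul b (ic x)]
  `<=` E mul by move=> b [hb _]; exact: hbs.1.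
case: (B3 DE Ddir Dsup) => _ [inj _] _ _ _; apply: inj; [by []|exact: esym exy|].
move=> _ [[j [hj <-]] wb]; apply: (P_coord_inj hj exy).
  exact: (a_gt0 hS hcpt hT2 hP hrho (idem_bs hj) (idem_idc hS x) wb).
by move=> k; apply: P_eq0_P_coord => //; exact: dmetric_eq0_P.
Qed.

(* Compactness: the closed sets [{y | d x y <= r} \ W] shrink to [{x} \ W = set0]. *)
Lemma dmetric_ball_sub_open x W : open W -> W x ->
  exists2 eps, 0 < eps & [set y | d x y < eps] `<=` W.
Proof.
move=> oW Wx; apply: contrapT => hn.
have [p hp] : exists p, forall r, 0 < r -> ([set y | d x y <= r] `&` ~` W) p.
  apply: (compact_directed_meet hcpt (ex_intro _ 1 ltr01)).
  - move=> r1 r2 h1 h2; exists (Num.min r1 r2); first by rewrite lt_min h1 h2.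
    move=> y [/= hy nW]; split; split => //=; apply: le_trans hy _;
      by rewrite ge_min lexx ?orbT.
  - move=> r _; apply: closedI; last exact: open_closedC.
    exact: ((continuous_closedP _).1 (@continuous_dmetric x) _ (closed_le (y := r))).
  - move=> r r0; apply: contrapT => hne; apply: hn; exists r => // y /= hy.
    by apply: contrapT => nWy; apply: hne; exists y; split => //; exact: ltW.
have dxp : d x p = 0.
  apply/eqP; rewrite eq_le dmetric_ge0 andbT leNgt; apply/negP => pos.
  by have [/= h _] := hp _ (divr_gt0 pos (ltr0n _ 2)); lra.
by have [_] := hp 1 ltr01; rewrite -(dmetric_eq0 dxp).
Qed.

Lemma dmetric_compatible : compatible_metric [set: S] d.
Proof.
split=> [x y z _ _ _|x _ U].
  split; [exact: dmetric_ge0| |exact: dmetric_sym|exact: dmetric_triangle].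
  by split=> [/dmetric_eq0|->]; last exact: dmetric_xx.
split=> [[W [oW Wx sWU]]|[eps [e0 sU]]].
  have [eps e0 hW] := dmetric_ball_sub_open oW Wx.
  by exists eps; split => // y [_ /hW Wy]; exact: sWU.
exists (d x @^-1` [set r | r < eps]); split => /=; last by move=> y [hy _]; exact: sU.
  exact: (open_comp (fun y _ => @continuous_dmetric x y) (open_lt (y := eps))).
by rewrite dmetric_xx.
Qed.

End Metric.

Unset Implicit Arguments. Set Strict Implicit.

Theorem corollary4p16 (R : realType) (S : topologicalType)
  (mul : S -> S -> S) (inv : S -> S)
  (hS : topological_clifford mul inv)
  (hcpt : compact [set: S]) (hT2 : hausdorff_space S)
  (B1 : perfect_semilattice mul /\ metrizable (R := R) (E mul))
  (B2 : forall e, E mul e ->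
          compact (G mul inv e) /\ metrizable (R := R) (G mul inv e))
  (B3 : inverse_limit_preserving mul inv)
  (rho : S -> S -> R) (bs : nat -> S) (db : S -> S -> S -> R)
  (c : S -> S) (t : S -> nat -> S)
  (hrho : compatible_metric (E mul) rho /\
          forall x y, E mul x -> E mul y -> rho x y <= 1)
  (hbs : domain_basis mul [set b | exists j, (0 < j)%N /\ bs j = b])
  (hdb : forall j, (0 < j)%N ->
     compatible_metric (G mul inv (bs j)) (db (bs j)) /\
     forall x y, G mul inv (bs j) x -> G mul inv (bs j) y -> db (bs j) x y <= 1)
  (hc : forall j, (0 < j)%N -> G mul inv (bs j) (c (bs j)))
  (ht : forall j, (0 < j)%N -> dense_seq (G mul inv (bs j)) (fun k => t (bs j) k.+1)) :
  compatible_metric [set: S] (dmetric mul inv rho bs db c t).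
Proof.
case: B1 => hP _; case: hrho => hrho hrho1.
exact: (dmetric_compatible hS hcpt hT2 hP B3 hrho hrho1 hbs hdb hc ht).
Qed.
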